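(* Let $\alpha,\beta\in\mathbb R_\flat$ with $\alpha<\beta$. Then $\ell_\alpha(\mathbb N_0^d)\subseteq\ell_\beta(\mathbb N_0^d)$ and $\ell_{0,\alpha}(\mathbb N_0^d)\subseteq\ell_{0,\beta}(\mathbb N_0^d)$.
   Context: $\mathbb R_\flat=\mathbb R_+\cup\{\flat_\sigma:\sigma>0\}$, $\mathbb R_+=(0,\infty)$, ordered by the usual order on $\mathbb R_+$ together with: $x_1<\flat_{\sigma_1}<\flat_{\sigma_2}<x_2$ whenever $\sigma_1<\sigma_2$ and $x_1<1/2\le x_2$, $x_1,x_2\in\mathbb R_+$. For $n\in\mathbb N_0^d$, $|n|=\sum n_j$, $n!=\prod n_j!$. Weights: for $\alpha\in\mathbb R_+$, $h>0$, $\vartheta_{h,\alpha}(n)=e^{h|n|^{1/(2\alpha)}}$; for $\alpha=\flat_\sigma$, $\vartheta_{h,\flat_\sigma}(n)=h^{|n|}n!^{1/(2\sigma)}$. $\ell^\infty_{[\vartheta_{h,\alpha}]}(\mathbb N_0^d)$ is the space of complex sequences with $\sup_n|a_n|\vartheta_{h,\alpha}(n)<\infty$; $\ell_\alpha(\mathbb N_0^d)=\bigcup_{h>0}\ell^\infty_{[\vartheta_{h,\alpha}]}(\mathbb N_0^d)$ and $\ell_{0,\alpha}(\mathbb N_0^d)=\bigcap_{h>0}\ell^\infty_{[\vartheta_{h,\alpha}]}(\mathbb N_0^d)$, for every $\alpha\in\mathbb R_\flat$. *)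

From Stdlib Require Import Reals.
From Coquelicot Require Import Complex.
From mathcomp Require Import ssreflect ssrfun ssrbool eqtype ssrnat seq fintype bigop.

Set Implicit Arguments.
Unset Strict Implicit.

(* Elements of R_flat: a positive real x, or the symbol flat_sigma with sigma > 0. *)
Inductive Rflat : Type :=
| RFpos : R -> Rflat
| RFflat : R -> Rflat.

Definition Rflat_valid (a : Rflat) : Prop :=
  match a with
  | RFpos x => (0 < x)%R
  | RFflat s => (0 < s)%R
  end.

Definition Rflat_lt (a b : Rflat) : Prop :=
  match a, b with
  | RFpos x, RFpos y => (x < y)%R
  | RFpos x, RFflat _ => (x < / 2)%R
  | RFflat s1, RFflat s2 => (s1 < s2)%R
  | RFflat _, RFpos y => (/ 2 <= y)%R
  end.

Definition mindex (d : nat) := 'I_d -> nat.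
Definition mabs d (n : mindex d) : nat := \sum_(i < d) n i.
Definition mfact d (n : mindex d) : nat := \prod_(i < d) (n i)`!.

(* k^e for k : nat, e > 0 real, with 0^e = 0 *)
Definition natpow (k : nat) (e : R) : R :=
  match k with
  | O => 0%R
  | S _ => Rpower (INR k) e
  end.

Definition weight d (h : R) (a : Rflat) (n : mindex d) : R :=
  match a with
  | RFpos x => exp (h * natpow (mabs n) (/ (2 * x)))
  | RFflat s => (h ^ (mabs n) * Rpower (INR (mfact n)) (/ (2 * s)))%R
  end.

Definition in_linf_w d (h : R) (alpha : Rflat) (f : mindex d -> C) : Prop :=
  exists M : R, forall n : mindex d, (Cmod (f n) * weight h alpha n <= M)%R.

(* l_alpha = union over h > 0 ; l_{0,alpha} = intersection over h > 0 *)
Definition ell d (alpha : Rflat) (f : mindex d -> C) : Prop :=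
  exists h : R, (0 < h)%R /\ in_linf_w h alpha f.

Definition ell0 d (alpha : Rflat) (f : mindex d -> C) : Prop :=
  forall h : R, (0 < h)%R -> in_linf_w h alpha f.

From Stdlib Require Import Reals Lra Lia.
From Coquelicot Require Import Complex Rcomplements.
From mathcomp Require Import ssreflect ssrbool ssrnat seq fintype bigop binomial.
Open Scope R_scope.
Set Implicit Arguments.
Unset Strict Implicit.

(* For alpha < beta and every h > 0, the weight theta_{h,beta} is bounded by a
   constant multiple of theta_{h,alpha}; with the same h this yields both
   inclusions at once.  Inside R_+ and inside the flat part this is
   monotonicity in the exponent.  Across the two parts everything reduces to
   comparing ln k! with powers of k.  For x < 1/2 the exponent p = 1/(2x)
   exceeds 1, and h'^k (k!)^a <= K exp (h k^p) because the increments
   ln h' + a ln (k+1) of the logarithm of the left side are eventually smaller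
   than the increments of h k^p, which are at least h (k+1)^(p-1).  For
   y >= 1/2, exp (h' |n|) <= K h^|n| (n!)^a because ln n_i! eventually
   outgrows every linear function of n_i. *)

Lemma exp_le x y : x <= y -> exp x <= exp y.
Proof. by case=> [/exp_increasing/Rlt_le | ->] //; right. Qed.

Lemma exp_ge_tangent c t : 0 < c -> c * (1 + t - ln c) <= exp t.
Proof.
move=> Hc; have := exp_ineq1_le (t - ln c).
rewrite /Rminus exp_plus exp_Ropp exp_ln // => H.
have -> : exp t = c * (exp t * / c) by field; lra.
by apply: Rmult_le_compat_l; lra.
Qed.

Lemma bounded_of_eventually_nonincreasing (u : nat -> R) (N : nat) :
  (forall k, (N <= k)%N -> u k.+1 <= u k) -> exists M, forall k, u k <= M.
Proof.
elim: N u => [|N IH] u Hu.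
- exists (u 0%N); elim=> [|k IHk]; first by right.
  exact: Rle_trans (Hu k _) IHk.
- have [M HM] := IH (fun k => u k.+1) (fun k Hk => Hu k.+1 Hk).
  exists (Rmax (u 0%N) M); case=> [|k]; first exact: Rmax_l.
  exact: Rle_trans (HM k) (Rmax_r _ _).
Qed.

(* The tangent bound of [exp_ge_tangent] with c e = |A| + 1 leaves a spare
   ln x, which eventually absorbs the constants. *)
Lemma ln_le_Rpower_eventually e A B : 0 < e ->
  exists x0, forall x, x0 <= x -> A * ln x + B <= Rpower x e.
Proof.
move=> He; set c := (Rabs A + 1) / e; set L0 := Rmax 0 (B - c * (1 - ln c)).
have Hc : 0 < c by apply: Rdiv_lt_0_compat => //; have := Rabs_pos A; lra.
exists (exp L0) => x Hx.
have HL0 : 0 <= L0 := Rmax_l _ _.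
have HBL0 : B - c * (1 - ln c) <= L0 := Rmax_r _ _.
have HL : L0 <= ln x by rewrite -[L0]ln_exp; apply: ln_le => //; exact: exp_pos.
have HA : A * ln x <= Rabs A * ln x by apply: Rmult_le_compat_r; [lra | exact: Rle_abs].
have := exp_ge_tangent (e * ln x) Hc.
have -> : c * (1 + e * ln x - ln c) = (Rabs A + 1) * ln x + c * (1 - ln c)
  by rewrite /c; field; lra.
rewrite /Rpower; lra.
Qed.

Lemma INR_fact_gt0 m : 0 < INR m`!.
Proof. by apply: lt_0_INR; apply/ltP; exact: fact_gt0. Qed.

Lemma ln_fact_succ m : ln (INR (m.+1)`!) = ln (INR m.+1) + ln (INR m`!).
Proof.
rewrite factS -multE mult_INR ln_mult //; last exact: INR_fact_gt0.
by apply: lt_0_INR; lia.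
Qed.

Lemma linear_le_ln_fact b : exists c, forall m, INR m * b <= ln (INR m`!) + c.
Proof.
have [N HN] := INR_unbounded (exp b).
have [M HM] : exists M, forall m, INR m * b - ln (INR m`!) <= M.
  apply: (@bounded_of_eventually_nonincreasing _ N) => k Hk.
  have Hb : b <= ln (INR k.+1).
    rewrite -[b]ln_exp; apply: ln_le; first exact: exp_pos.
    have : INR N <= INR k.+1 by apply: le_INR; apply/leP; exact: leqW.
    lra.
  by rewrite ln_fact_succ S_INR in Hb *; lra.
by exists M => m; have := HM m; lra.
Qed.

Lemma fact_mul_le a b : (a`! * b`! <= (a + b)`!)%N.
Proof.
rewrite -(bin_fact (leq_addr b a)) addKn.
by apply: leq_pmull; rewrite bin_gt0 leq_addr.
Qed.

Lemma mfact_ge1 d (n : mindex d) : 1 <= INR (mfact n).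
Proof. by apply: (le_INR 1); apply/leP; rewrite prodn_gt0 // => i; exact: fact_gt0. Qed.

Lemma mfact_le_fact_mabs d (n : mindex d) : (mfact n <= (mabs n)`!)%N.
Proof.
rewrite /mfact /mabs; elim: (index_enum _) => [|i s IH]; rewrite ?big_nil ?big_cons //.
exact: leq_trans (leq_mul (leqnn _) IH) (fact_mul_le _ _).
Qed.

Lemma linear_le_ln_mfact d b :
  exists c, forall n : mindex d, INR (mabs n) * b <= ln (INR (mfact n)) + c.
Proof.
have [c Hc] := linear_le_ln_fact b.
exists (INR (size (index_enum 'I_d)) * c) => n; rewrite /mabs /mfact.
elim: (index_enum _) => [|i s IH]; first by rewrite !big_nil /= ln_1; lra.
rewrite !big_cons (S_INR (size s)).
set S := (\sum_(j <- s) n j)%N in IH *; set P := (\prod_(j <- s) (n j)`!)%N in IH *.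
have HP : 0 < INR P by apply: lt_0_INR; apply/ltP; rewrite prodn_gt0 // => j; exact: fact_gt0.
rewrite -plusE -multE plus_INR mult_INR ln_mult //; last exact: INR_fact_gt0.
set z := INR (size s) in IH *; have := Hc (n i); lra.
Qed.

Lemma natpow_S k e : natpow k.+1 e = Rpower (INR k.+1) e.
Proof. by []. Qed.

Lemma natpow_1 k : natpow k 1 = INR k.
Proof. by case: k => [|k] //; rewrite natpow_S Rpower_1 //; apply: lt_0_INR; lia. Qed.

Lemma natpow_le_exponent k e1 e2 : e1 <= e2 -> natpow k e1 <= natpow k e2.
Proof.
case: k => [|k] He; first by right.
by rewrite !natpow_S; apply: Rle_Rpower => //; apply: (le_INR 1); lia.
Qed.

Lemma natpow_succ_sub_ge k p : 1 <= p ->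
  Rpower (INR k.+1) (p - 1) <= natpow k.+1 p - natpow k p.
Proof.
move=> Hp.
have Hsplit m : 0 < m -> Rpower m p = m * Rpower m (p - 1).
  by move=> Hm; rewrite -{2}(Rpower_1 _ Hm) -Rpower_plus; f_equal; ring.
have Hk : natpow k p <= INR k * Rpower (INR k.+1) (p - 1).
  case: k => [|k]; first by rewrite /= Rmult_0_l; right.
  rewrite natpow_S Hsplit; last by apply: lt_0_INR; lia.
  apply: Rmult_le_compat_l; first exact: pos_INR.
  apply: Rle_Rpower_l; first lra.
  by split; [apply: lt_0_INR; lia | apply: le_INR; lia].
rewrite natpow_S Hsplit; last by apply: lt_0_INR; lia.
by set r := Rpower _ _ in Hk *; rewrite S_INR; lra.
Qed.

Lemma linear_add_ln_fact_le_natpow b a h p : 0 < h -> 1 < p ->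
  exists M, forall k, INR k * b + a * ln (INR k`!) <= M + h * natpow k p.
Proof.
move=> Hh Hp; have Hp1 : 0 < p - 1 by lra.
have [x0 Hev] := ln_le_Rpower_eventually (a / h) (b / h) Hp1.
have [N HN] := INR_unbounded x0.
have [M HM] : exists M, forall k,
    INR k * b + a * ln (INR k`!) - h * natpow k p <= M.
  apply: (@bounded_of_eventually_nonincreasing _ N) => k Hk.
  have Hx : x0 <= INR k.+1.
    have : INR N <= INR k.+1 by apply: le_INR; apply/leP; exact: leqW.
    lra.
  have Hgrowth : a * ln (INR k.+1) + b <= h * (natpow k.+1 p - natpow k p).
    apply: Rle_trans (Rmult_le_compat_l _ _ _ (Rlt_le _ _ Hh)
      (Rle_trans _ _ _ (Hev _ Hx) (natpow_succ_sub_ge k (Rlt_le _ _ Hp)))).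
    by right; field; lra.
  by rewrite ln_fact_succ; set L := ln (INR k.+1) in Hgrowth *; rewrite S_INR; lra.
by exists M => k; have := HM k; lra.
Qed.

Definition dominates d (w v : mindex d -> R) : Prop :=
  exists2 K, 0 <= K & forall n, v n <= K * w n.

Lemma in_linf_w_dominates d h alpha h' beta (f : mindex d -> C) :
  dominates (@weight d h alpha) (@weight d h' beta) ->
  in_linf_w h alpha f -> in_linf_w h' beta f.
Proof.
move=> [K HK Hw] [M HM]; exists (K * M) => n.
apply: Rle_trans (Rmult_le_compat_l _ _ _ (Cmod_ge_0 (f n)) (Hw n)) _.
rewrite -Rmult_assoc (Rmult_comm _ K) Rmult_assoc.
exact: Rmult_le_compat_l.
Qed.

Lemma weight_flat_exp d h s (n : mindex d) : 0 < h ->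
  weight h (RFflat s) n = exp (INR (mabs n) * ln h + / (2 * s) * ln (INR (mfact n))).
Proof. by move=> Hh; rewrite exp_plus /= -(Rpower_pow _ _ Hh). Qed.

Lemma dominates_pos_pos d h x y : 0 < x -> x < y -> 0 <= h ->
  dominates (@weight d h (RFpos x)) (@weight d h (RFpos y)).
Proof.
move=> Hx Hxy Hh; exists 1 => [|n]; first lra.
rewrite Rmult_1_l; apply: exp_le; apply: Rmult_le_compat_l => //.
by apply: natpow_le_exponent; apply: Rlt_le; apply: Rinv_lt_contravar; nra.
Qed.

Lemma dominates_flat_flat d h s1 s2 : 0 < s1 -> s1 < s2 -> 0 <= h ->
  dominates (@weight d h (RFflat s1)) (@weight d h (RFflat s2)).
Proof.
move=> Hs Hss Hh; exists 1 => [|n]; first lra.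
rewrite Rmult_1_l; apply: Rmult_le_compat_l; first exact: pow_le.
apply: Rle_Rpower; first exact: mfact_ge1.
by apply: Rlt_le; apply: Rinv_lt_contravar; nra.
Qed.

Lemma dominates_pos_flat d h h' x s : 0 < x < / 2 -> 0 < s -> 0 < h -> 0 < h' ->
  dominates (@weight d h (RFpos x)) (@weight d h' (RFflat s)).
Proof.
move=> [Hx Hx2] Hs Hh Hh'.
have Hp : 1 < / (2 * x) by rewrite -Rinv_1; apply: Rinv_lt_contravar; lra.
have Ha : 0 <= / (2 * s) by apply: Rlt_le; apply: Rinv_0_lt_compat; lra.
have [M HM] := linear_add_ln_fact_le_natpow (ln h') (/ (2 * s)) Hh Hp.
exists (exp M) => [|n]; first exact: Rlt_le (exp_pos M).
rewrite weight_flat_exp // -exp_plus; apply: exp_le.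
apply: Rle_trans (HM (mabs n)); apply: Rplus_le_compat_l.
apply: Rmult_le_compat_l => //; apply: ln_le; first by have := mfact_ge1 n; lra.
by apply: le_INR; apply/leP; exact: mfact_le_fact_mabs.
Qed.

Lemma dominates_flat_pos d h h' s y : 0 < s -> / 2 <= y -> 0 < h -> 0 <= h' ->
  dominates (@weight d h (RFflat s)) (@weight d h' (RFpos y)).
Proof.
move=> Hs Hy Hh Hh'.
have Hq : / (2 * y) <= 1 by rewrite -Rinv_1; apply: Rinv_le_contravar; lra.
have Ha : 0 < / (2 * s) by apply: Rinv_0_lt_compat; lra.
have [c Hc] := linear_le_ln_mfact d ((h' - ln h) * (2 * s)).
exists (exp (/ (2 * s) * c)) => [|n]; first exact: Rlt_le (exp_pos _).
rewrite weight_flat_exp // -exp_plus; apply: exp_le.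
have Hk : h' * natpow (mabs n) (/ (2 * y)) <= h' * INR (mabs n).
  by rewrite -natpow_1; apply: Rmult_le_compat_l => //; exact: natpow_le_exponent.
have := Rmult_le_compat_l _ _ _ (Rlt_le _ _ Ha) (Hc n).
have -> : / (2 * s) * (INR (mabs n) * ((h' - ln h) * (2 * s)))
  = INR (mabs n) * h' - INR (mabs n) * ln h by field; lra.
lra.
Qed.

Lemma weight_dominates_of_lt d h alpha beta :
  Rflat_valid alpha -> Rflat_valid beta -> Rflat_lt alpha beta -> 0 < h ->
  dominates (@weight d h alpha) (@weight d h beta).
Proof.
case: alpha => [x|s1]; case: beta => [y|s2] /= Ha Hb Hlt Hh.
- exact: dominates_pos_pos (Rlt_le _ _ Hh).
- exact: dominates_pos_flat.
- exact: dominates_flat_pos (Rlt_le _ _ Hh).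
- exact: dominates_flat_flat (Rlt_le _ _ Hh).
Qed.

Theorem lemma6p1 (alpha beta : Rflat) :
  Rflat_valid alpha -> Rflat_valid beta -> Rflat_lt alpha beta ->
  forall d : nat,
    (forall f : mindex d -> C, ell alpha f -> ell beta f) /\
    (forall f : mindex d -> C, ell0 alpha f -> ell0 beta f).
Proof.
move=> Ha Hb Hlt d; split=> f.
- move=> [h [Hh Hf]]; exists h; split=> //.
  exact: in_linf_w_dominates (weight_dominates_of_lt d Ha Hb Hlt Hh) Hf.
- move=> Hf h Hh.
  exact: in_linf_w_dominates (weight_dominates_of_lt d Ha Hb Hlt Hh) (Hf h Hh).
Qed.
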